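(* Let $G=(V,E)$ be a graph and $g:V\to[0,r]$ a function such that $VS_g(x,y)\le v$ for all $x,y\in V$. Let $M$ be a maximal matching in the violation graph $B_{2v/3,g}$ (each edge $(x,y)\in M$ oriented so that $g(x)<g(y)$). Obtain $h$ from $g$ by setting, for every $(x,y)\in M$, $h(x)=g(x)+v/3$ and $h(y)=g(y)-v/3$, and $h(z)=g(z)$ for unmatched $z$. Then $VS_h(x,y)\le 2v/3$ for all $x,y\in V$.
   Context: $\mathrm{dist}_G$ is the shortest-path distance. For $f:V\to\mathbb{R}$, the violation score is $VS_f(x,y)=|f(x)-f(y)|-\mathrm{dist}_G(x,y)$ if this quantity is positive and $0$ otherwise. For $\tau\ge0$, the violation graph $B_{\tau,f}$ is the directed graph on $V$ with edge set $\{(x,y): VS_f(x,y)>\tau \text{ and } f(x)<f(y)\}$; a matching in it means a matching in its underlying undirected graph. *)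

From HB Require Import structures.
From mathcomp Require Import all_boot all_order all_algebra.
Set Implicit Arguments. Unset Strict Implicit. Unset Printing Implicit Defensive.
Import Order.TTheory GRing.Theory Num.Theory.
Local Open Scope ring_scope.

Section Defs.
Variables (V : finType) (e : rel V).

Fixpoint reachn (x : V) (n : nat) : {set V} :=
  match n with
  | 0 => [set x]
  | n'.+1 => [set z | [exists y in reachn x n', e y z]]
  end.

(* shortest-path distance: Some d, or None (= +infinity) if y is not
   reachable from x.  A shortest walk is a simple path, so it has
   fewer than #|V| edges; searching n in [0, #|V|) is exhaustive. *)
Definition dist (x y : V) : option nat :=
  let i := find (fun n => y \in reachn x n) (iota 0 #|V|) in
  if (i < #|V|)%N then Some i else None.

Variable R : realFieldType.

(* violation score; with infinite distance the quantity is negative, hence 0 *)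
Definition VS (f : V -> R) (x y : V) : R :=
  match dist x y with
  | Some d => Num.max 0 (`|f x - f y| - d%:R)
  | None => 0
  end.

Definition viol_edge (tau : R) (f : V -> R) (x y : V) : bool :=
  (tau < VS f x y) && (f x < f y).

Definition is_matching (tau : R) (f : V -> R) (M : {set V * V}) : Prop :=
  (forall p, p \in M -> viol_edge tau f p.1 p.2) /\
  (forall p q, p \in M -> q \in M -> p != q ->
     [disjoint [set p.1; p.2] & [set q.1; q.2]]).

Definition is_maximal_matching (tau : R) (f : V -> R) (M : {set V * V}) : Prop :=
  is_matching tau f M /\
  (forall x y, viol_edge tau f x y -> (x, y) \notin M ->
     ~ is_matching tau f ((x, y) |: M)).

Definition shift_along (g : V -> R) (v : R) (M : {set V * V}) (z : V) : R :=
  if [exists y, (z, y) \in M] then g z + v / 3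
  else if [exists x, (x, z) \in M] then g z - v / 3
  else g z.

End Defs.

(* A matched
   vertex z moves by exactly v/3 towards its partner z', and the edge
   (z, z') of B_{2v/3,g} has |g z - g z'| > dist z z' + 2v/3; so the shifted
   value h z still lies a margin v/3 inside the window allowed by the
   partner.  Hence, if x or y is matched, the bound h x - h y <= dist x y
   + 2v/3 follows from VS_g <= v applied to the partners and the triangle
   inequality.  If both are unmatched, h = g at x and y, and a violation
   larger than 2v/3 between them would be an edge that could be added to M,
   contradicting maximality. *)
From HB Require Import structures.
From mathcomp Require Import all_boot all_order all_algebra lra.
Import Order.TTheory GRing.Theory Num.Theory.
Set Implicit Arguments. Unset Strict Implicit. Unset Printing Implicit Defensive.

Section Distance.
Variables (V : finType) (e : rel V).

Lemma reachnP x y n :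
  reflect (exists p, [/\ size p = n, path e x p & last x p = y])
          (y \in reachn e x n).
Proof.
apply: (iffP idP).
  elim: n y => [|n IH] y /=; first by rewrite inE => /eqP->; exists [::].
  rewrite inE => /existsP[y' /andP[/IH[p [<- xp <-]] ey]].
  by exists (rcons p y); rewrite size_rcons rcons_path last_rcons xp ey.
case=> p [<- xp <-] {n y}; elim/last_ind: p xp => [|p z IH]; first by rewrite inE.
rewrite rcons_path size_rcons last_rcons /= inE => /andP[xp ez].
by apply/existsP; exists (last x p); rewrite IH.
Qed.

Lemma reachn_lt_card x y n :
  y \in reachn e x n -> exists2 m, (m < #|V|)%N & y \in reachn e x m.
Proof.
case/reachnP=> p [_ xp <-]; case: (shortenP xp) => q xq uq _.
exists (size q); last by apply/reachnP; exists q.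
by have := max_card (mem (x :: q)); rewrite (card_uniqP uq).
Qed.

Lemma reachn_cat x y z m n :
  y \in reachn e x m -> z \in reachn e y n -> z \in reachn e x (m + n).
Proof.
case/reachnP=> p [<- xp <-] /reachnP[q [<- yq <-]].
by apply/reachnP; exists (p ++ q); rewrite size_cat cat_path last_cat xp yq.
Qed.

Lemma reachn_sym : symmetric e ->
  forall x y n, y \in reachn e x n -> x \in reachn e y n.
Proof.
move=> e_sym x y n /reachnP[p [<- xp <-]]; apply/reachnP.
exists (rev (belast x p)); rewrite size_rev size_belast rev_path.
split=> //; last by case: p {xp} => //= z p; rewrite rev_cons last_rcons.
by rewrite (@eq_path _ _ e) // => a b /=; rewrite e_sym.
Qed.

Lemma dist_Some x y d :
  dist e x y = Some d ->
  y \in reachn e x d /\ forall m, y \in reachn e x m -> (d <= m)%N.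
Proof.
rewrite /dist; set P := fun n => _; case: ifP => // d_lt [<-].
have hasP : has P (iota 0 #|V|) by rewrite has_find size_iota.
split=> [|m ym]; first by have := nth_find 0 hasP; rewrite nth_iota.
have [m_lt|le_m] := ltnP m #|V|; last exact/ltnW/(leq_trans d_lt le_m).
rewrite leqNgt; apply/negP => /(before_find 0).
by rewrite nth_iota // add0n /P ym.
Qed.

Lemma reachn_dist x y n :
  y \in reachn e x n -> exists2 d, dist e x y = Some d & (d <= n)%N.
Proof.
move=> yn; have [m m_lt ym] := reachn_lt_card yn.
set P := fun k => y \in reachn e x k.
have : has P (iota 0 #|V|) by apply/hasP; exists m; rewrite ?mem_iota.
rewrite has_find size_iota => find_lt.
have dxy : dist e x y = Some (find P (iota 0 #|V|)) by rewrite /dist find_lt.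
by exists (find P (iota 0 #|V|)); last exact: (dist_Some dxy).2.
Qed.

Lemma dist_self x : dist e x x = Some 0.
Proof.
have [d dx] := @reachn_dist x x 0 (set11 x).
by rewrite leqn0 => /eqP d0; rewrite dx d0.
Qed.

Lemma dist_sym : symmetric e -> forall x y d, dist e x y = Some d -> dist e y x = Some d.
Proof.
move=> e_sym x y d /dist_Some[yd d_min].
have [d' dyx le_d'd] := reachn_dist (reachn_sym e_sym yd).
have /dist_Some[xd' _] := dyx.
by rewrite dyx; congr Some; apply/eqP; rewrite eqn_leq le_d'd (d_min _ (reachn_sym e_sym xd')).
Qed.

Lemma dist_triangle x y z a b :
  dist e x y = Some a -> dist e y z = Some b ->
  exists2 c, dist e x z = Some c & (c <= a + b)%N.
Proof. by move=> /dist_Some[ya _] /dist_Some[zb _]; apply/reachn_dist/(reachn_cat ya). Qed.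

End Distance.

Local Open Scope ring_scope.

Section ViolationScore.
Variables (R : realFieldType) (V : finType) (e : rel V).
Implicit Types (f : V -> R) (tau : R).

Lemma VS_ge0 f x y : 0 <= VS e f x y.
Proof. by rewrite /VS; case: dist => // d; rewrite le_max lexx. Qed.

Lemma VS_gap f x y d : dist e x y = Some d -> f x - f y <= d%:R + VS e f x y.
Proof.
move=> dxy; rewrite /VS dxy -lerBlDl le_max; apply/orP; right.
by rewrite lerB // ler_norm.
Qed.

Lemma VS_le f x y t : 0 <= t ->
  (forall d, dist e x y = Some d -> `|f x - f y| <= d%:R + t) -> VS e f x y <= t.
Proof.
rewrite /VS => t_ge0; case: dist => // d /(_ d erefl) fxy.
by rewrite ge_max t_ge0 lerBlDl.
Qed.

Lemma viol_edge_gap tau f x y : 0 <= tau -> viol_edge e tau f x y ->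
  exists d, dist e x y = Some d /\ d%:R + tau < f y - f x.
Proof.
rewrite /viol_edge /VS => tau_ge0; case: dist => [d|]; last by rewrite ltNge tau_ge0.
rewrite lt_max ltNge tau_ge0 /= => /andP[gap fxy]; exists d; split=> //.
by move: gap; rewrite distrC gtr0_norm ?subr_gt0 // ltrBrDl.
Qed.

Lemma gap_viol_edge tau f x y d : 0 <= tau -> dist e x y = Some d ->
  d%:R + tau < f y - f x -> viol_edge e tau f x y.
Proof.
move=> tau_ge0 dxy gap; have d_ge0 : 0 <= d%:R :> R by [].
rewrite /viol_edge /VS dxy lt_max distrC gtr0_norm; last lra.
by rewrite ltrBrDl gap orbT -subr_gt0; lra.
Qed.

End ViolationScore.

Section MaximalMatching.
Variables (R : realFieldType) (V : finType) (e : rel V).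

Definition matched (M : {set V * V}) (z : V) : bool :=
  [exists y, (z, y) \in M] || [exists x, (x, z) \in M].

Lemma unmatched_pair M z p : ~~ matched M z -> p \in M -> (p.1 != z) && (p.2 != z).
Proof.
case: p => a b; rewrite negb_or => /andP[/existsPn z1 /existsPn z2] ab /=.
by apply/andP; split; apply: contraTneq ab => ->; [exact: z1 | exact: z2].
Qed.

Lemma maximal_matching_unmatched (tau : R) f M x y :
  is_maximal_matching e tau f M -> ~~ matched M x -> ~~ matched M y ->
  ~~ viol_edge e tau f x y.
Proof.
case=> -[M_edge M_disj] M_max x_free y_free; apply/negP => xy.
have xy_notin : (x, y) \notin M by apply/negP => /(unmatched_pair x_free)/andP[/eqP].
apply: (M_max x y xy xy_notin); split.
  by move=> p; rewrite in_setU1 => /predU1P[->|/M_edge].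
have disj q : q \in M -> [disjoint [set x; y] & [set q.1; q.2]].
  move=> qM; have /andP[qx1 qx2] := unmatched_pair x_free qM.
  have /andP[qy1 qy2] := unmatched_pair y_free qM.
  rewrite disjoint_sym disjoint_subset; apply/subsetP => z.
  by rewrite !inE => /orP[]/eqP->; rewrite negb_or ?qx1 ?qy1 ?qx2 ?qy2.
move=> p q; rewrite !in_setU1 => /predU1P[->|pM] /predU1P[->|qM] pq.
- by rewrite eqxx in pq.
- exact: disj.
- by rewrite disjoint_sym; apply: disj.
- exact: M_disj.
Qed.

End MaximalMatching.

Section Shift.
Variables (R : realFieldType) (V : finType) (e : rel V) (e_sym : symmetric e).
Variables (g : V -> R) (v : R) (M : {set V * V}).
Hypothesis hVS : forall x y, VS e g x y <= v.
Hypothesis hM : is_maximal_matching e (2 * v / 3) g M.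

Local Notation h := (shift_along g v M).

(* The vertex argument only witnesses that V is nonempty. *)
Let v_ge0 (x : V) : 0 <= v := le_trans (VS_ge0 e g x x) (hVS x x).

Variant shift_along_spec z : R -> bool -> Prop :=
  | ShiftUp z' of (z, z') \in M : shift_along_spec z (g z + v / 3) true
  | ShiftDown z' of (z', z) \in M : shift_along_spec z (g z - v / 3) true
  | ShiftFixed of ~~ matched M z : shift_along_spec z (g z) false.

Lemma shift_alongP z : shift_along_spec z (h z) (matched M z).
Proof.
rewrite /shift_along /matched.
case: ifP => [/existsP[z' zz']|up]; first exact: ShiftUp zz'.
case: ifP => [/existsP[z' z'z]|down]; first exact: ShiftDown z'z.
by apply: ShiftFixed; rewrite /matched up down.
Qed.

Lemma shift_along_unmatched z : ~~ matched M z -> h z = g z.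
Proof. by case: shift_alongP. Qed.

Lemma matching_edge_gap x y : (x, y) \in M ->
  exists d, dist e x y = Some d /\ d%:R + 2 * v / 3 < g y - g x.
Proof.
move=> xy; apply: viol_edge_gap; last exact: hM.1.1 _ xy.
by have := v_ge0 x; lra.
Qed.

Let margin z : R := if matched M z then v / 3 else 0.

Lemma shift_upper z : exists u d, dist e z u = Some d /\ h z + margin z <= g u - d%:R.
Proof.
rewrite /margin; case: shift_alongP => [z' zz'|z' z'z|_].
- have [d [dzz' gap]] := matching_edge_gap zz'.
  by exists z', d; split=> //; lra.
- by exists z, 0%N; rewrite dist_self; split=> //; lra.
- by exists z, 0%N; rewrite dist_self; split=> //; lra.
Qed.

Lemma shift_lower z : exists w d, dist e z w = Some d /\ g w + d%:R + margin z <= h z.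
Proof.
rewrite /margin; case: shift_alongP => [z' zz'|z' z'z|_].
- by exists z, 0%N; rewrite dist_self; split=> //; lra.
- have [d [dz'z gap]] := matching_edge_gap z'z.
  by exists z', d; rewrite (dist_sym e_sym dz'z); split=> //; lra.
- by exists z, 0%N; rewrite dist_self; split=> //; lra.
Qed.

Lemma unmatched_gap x y d : ~~ matched M x -> ~~ matched M y ->
  dist e x y = Some d -> g x - g y <= d%:R + 2 * v / 3.
Proof.
move=> x_free y_free dxy; rewrite leNgt; apply/negP => gap.
have := maximal_matching_unmatched hM y_free x_free; apply/negP/negPn.
by apply: gap_viol_edge (dist_sym e_sym dxy) _; [have := v_ge0 x; lra | lra].
Qed.

Lemma shift_gap x y d : dist e x y = Some d -> h x - h y <= d%:R + 2 * v / 3.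
Proof.
move=> dxy; have v0 := v_ge0 x.
have [/andP[x_free y_free]|] := boolP (~~ matched M x && ~~ matched M y).
  by rewrite !shift_along_unmatched //; apply: unmatched_gap.
rewrite negb_and !negbK => some_matched.
have [u [a [dxu hx]]] := shift_upper x; have [w [b [dyw hy]]] := shift_lower y.
have [c dxw le_c] := dist_triangle dxy dyw.
have [c' duw le_c'] := dist_triangle (dist_sym e_sym dxu) dxw.
have := VS_gap g duw; have := hVS u w.
have : c'%:R <= a%:R + (d%:R + b%:R) :> R.
  by rewrite -!natrD ler_nat (leq_trans le_c') ?leq_add2l.
move: some_matched hx hy; rewrite /margin => /orP[]->; case: ifP => _; lra.
Qed.

End Shift.

Theorem claim2p3 (R : realFieldType) (V : finType) (e : rel V)
  (e_sym : symmetric e) (e_irr : irreflexive e)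
  (g : V -> R) (r v : R)
  (g_range : forall x, 0 <= g x <= r)
  (hVS : forall x y, VS e g x y <= v)
  (M : {set V * V})
  (hM : is_maximal_matching e (2 * v / 3) g M) :
  forall x y, VS e (shift_along g v M) x y <= 2 * v / 3.
Proof.
move=> x y; have v_ge0 := le_trans (VS_ge0 e g x x) (hVS x x).
apply: VS_le => [|d dxy]; first lra.
have := shift_gap e_sym hVS hM dxy; have := shift_gap e_sym hVS hM (dist_sym e_sym dxy).
by rewrite ler_norml; lra.
Qed.
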